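(* There exists a positive integer $d_0$ such that the following holds for all integers $d \geq d_0$. Let $n \geq d+1$ be an even integer, and let $G$ be a $d$-regular graph on $[n]$. Then there exists a balanced bipartition $\{X,Y\}$ of $[n]$ (i.e. $|X|=|Y|=n/2$) such that for each graph $H \in \{G[X,Y], G[X], G[Y]\}$, we have $\frac{d}{2}-d^{2/3}\leq \deg_H(v) \leq \frac{d}{2} + d^{2/3}$ for every $v \in V(H)$.
   Context: Graphs are simple and finite. For $U\subseteq V(G)$, $G[U]$ is the induced subgraph on $U$; for disjoint $X,Y\subseteq V(G)$, $G[X,Y]$ is the bipartite subgraph with vertex set $X\cup Y$ consisting of all edges of $G$ with one endpoint in $X$ and the other in $Y$. *)

From Stdlib Require Import Reals.
From mathcomp Require Import all_boot.

Definition simple_graph (n : nat) (e : rel 'I_n) : Prop :=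
  symmetric e /\ irreflexive e.

Definition regular (n : nat) (e : rel 'I_n) (d : nat) : Prop :=
  forall v : 'I_n, #|[set u | e v u]| = d.

Definition deg_induced (n : nat) (e : rel 'I_n) (X : {set 'I_n}) (v : 'I_n) : nat :=
  #|[set u in X | e v u]|.

(* Degree of v (v in X :|: Y, X Y disjoint) in the bipartite subgraph G[X,Y]. *)
Definition deg_bip (n : nat) (e : rel 'I_n) (X Y : {set 'I_n}) (v : 'I_n) : nat :=
  if v \in X then #|[set u in Y | e v u]| else #|[set u in X | e v u]|.

Local Open Scope R_scope.
Definition deg_ok (d k : nat) : Prop :=
  (INR d / 2 - Rpower (INR d) (2 / 3) <= INR k <= INR d / 2 + Rpower (INR d) (2 / 3)).

Arguments simple_graph {n} e.
Arguments regular {n} e d.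
Arguments deg_induced {n} e X v.
Arguments deg_bip {n} e X Y v.

(* Pair up the vertices and put exactly one vertex of each pair into [X], choosing
   the sides independently and uniformly; then [|X| = |Y| = n/2].  As [G] is
   [d]-regular, each required degree of [v] is [|N(v) :&: X|] or [d - |N(v) :&: X|],
   so it suffices that [|N(v) :&: X|] is within [t = d^(2/3)] of [d/2] for all [v].  Now
   [2 |N(v) :&: X| - d] is a sum of independent signs, one per pair meeting [N(v)]
   (a pair inside [N(v)] contributes [1 - 1 = 0]), so the exponential moment bound
   shows that [v] fails for at most a fraction [2 exp(2 l^2 d - 2 l t)] of the
   [2^(n/2)] choices.  The failure of [v] depends only on the pairs meeting [N(v)],
   hence is independent of the failures of all but [2 d^2] vertices.  With
   [l = d^(-1/3) / 2] the fraction is [2 exp(- d^(1/3) / 2)], and the counting form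
   of the Lovasz Local Lemma gives a choice with no failure once [d >= 2^96]. *)

From Stdlib Require Import Reals Lra Lia.
From mathcomp Require Import all_boot Rstruct zify.

Local Open Scope R_scope.

Lemma leq_card_bigcup (T I : finType) (P : {pred I}) (F : I -> {set T}) :
  (#|\bigcup_(i in P) F i| <= \sum_(i in P) #|F i|)%N.
Proof.
elim/big_rec2: _ => [|i U k _ le_Uk]; first by rewrite cards0.
by rewrite cardsU (leq_trans (leq_subr _ _)) ?leq_add.
Qed.

Lemma INR_leq {m n : nat} : (m <= n)%N -> INR m <= INR n.
Proof. by move/leP; apply: le_INR. Qed.

Lemma INR_expn (m k : nat) : INR (m ^ k) = INR m ^ k.
Proof. by elim: k => [|k IHk] //; rewrite expnS -multE mult_INR IHk. Qed.

Lemma INR_cardsID {T : finType} (A B : {set T}) :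
  INR #|A| = INR #|A :&: B| + INR #|A :\: B|.
Proof. by rewrite -plus_INR plusE cardsID. Qed.

Lemma INR_sum (I : finType) (P : {pred I}) (f : I -> nat) :
  INR (\sum_(j in P) f j) = \big[Rplus/0]_(j in P) INR (f j).
Proof. exact: (big_morph INR plus_INR). Qed.

Lemma big_Rplus_le (I : Type) (r : seq I) (P : pred I) (F G : I -> R) :
  (forall j, P j -> F j <= G j) ->
  \big[Rplus/0]_(j <- r | P j) F j <= \big[Rplus/0]_(j <- r | P j) G j.
Proof.
move=> leFG; apply: (big_ind2 (fun x y => x <= y)) => //; first lra.
by move=> *; apply: Rplus_le_compat.
Qed.

Lemma big_Rplus_ge0 (I : Type) (r : seq I) (P : pred I) (F : I -> R) :
  (forall j, P j -> 0 <= F j) -> 0 <= \big[Rplus/0]_(j <- r | P j) F j.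
Proof.
move=> F_ge0; apply: (big_ind (fun x => 0 <= x)) => //; first lra.
by move=> *; lra.
Qed.

Lemma big_Rplus_const (I : finType) (P : {pred I}) (c : R) :
  \big[Rplus/0]_(j in P) c = INR #|P| * c.
Proof.
rewrite big_const; elim: #|P| => [|k IHk]; first by rewrite /=; lra.
by rewrite iterS IHk S_INR; lra.
Qed.

Lemma big_Rmult_le (I : Type) (r : seq I) (P : pred I) (F G : I -> R) :
  (forall j, P j -> 0 <= F j <= G j) ->
  \big[Rmult/1]_(j <- r | P j) F j <= \big[Rmult/1]_(j <- r | P j) G j.
Proof.
move=> leFG.
suff [] : 0 <= \big[Rmult/1]_(j <- r | P j) F j <= \big[Rmult/1]_(j <- r | P j) G j by [].
apply: (big_ind2 (fun x y => 0 <= x <= y)) => //; first lra.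
by move=> a b c d [? ?] [? ?]; split; [nra | apply: Rmult_le_compat].
Qed.

Lemma big_Rmult_const (I : finType) (P : {pred I}) (c : R) :
  \big[Rmult/1]_(j in P) c = c ^ #|P|.
Proof. by rewrite big_const; elim: #|P| => [|k IHk] //; rewrite iterS IHk. Qed.

Section LocalLemma.

Variables (T I : finType) (A : I -> {set T}) (G : I -> {set I}) (p : R) (D : nat).

Definition avoid (S : {set I}) : {set T} := \bigcap_(j in S) ~: A j.

Hypothesis indepA : forall i (S : {set I}), [disjoint S & G i] ->
  (#|A i :&: avoid S| * #|T| <= #|A i| * #|avoid S|)%N.
Hypothesis probA : forall i, INR #|A i| <= p * INR #|T|.
Hypothesis card_G : forall i, (#|G i| <= D)%N.
Hypothesis p_ge0 : 0 <= p.
Hypothesis p_lt_half : 2 * p < 1.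
Hypothesis pD_small : 4 * p * INR D <= 1.
Hypothesis T_gt0 : (0 < #|T|)%N.

Lemma cond_le_indep i (S : {set I}) : [disjoint S & G i] ->
  INR #|A i :&: avoid S| <= p * INR #|avoid S|.
Proof.
move=> /indepA /INR_leq; rewrite -!multE !mult_INR => le_indep.
have T_gtR : 0 < INR #|T| by apply: lt_0_INR; apply/ltP.
have := probA i; have := pos_INR #|avoid S|.
by move=> *; apply: (Rmult_le_reg_r (INR #|T|)) => //; nra.
Qed.

Lemma avoid_gt0_step (S : {set I}) i : i \in S -> (0 < #|avoid (S :\ i)|)%N ->
  INR #|A i :&: avoid (S :\ i)| <= 2 * p * INR #|avoid (S :\ i)| ->
  (0 < #|avoid S|)%N.
Proof.
move=> Si; rewrite /avoid (big_setD1 i Si) /=.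
set B := \bigcap_(j in S :\ i) ~: A j => B_gt0 le_AB.
have -> : ~: A i :&: B = B :\: A i by rewrite setDE setIC.
have := INR_cardsID B (A i); rewrite setIC.
have : 0 < INR #|B| by apply: lt_0_INR; apply/ltP.
by move=> *; apply/ltP; apply: INR_lt => /=; nra.
Qed.

(* Union bound: the outcomes avoiding [S :\: G i] either avoid all of [S] or lie
   in some [A j] with [j \in S :&: G i]; at most [D] such [j] halve the count. *)
Lemma cond_le_step (S : {set I}) i :
  (forall j, j \in S :&: G i ->
     INR #|A j :&: avoid (S :\: G i)| <= 2 * p * INR #|avoid (S :\: G i)|) ->
  INR #|A i :&: avoid S| <= 2 * p * INR #|avoid S|.
Proof.
move=> IH; set S1 := S :&: G i; set S2 := S :\: G i.
have avoidS : avoid S = avoid S1 :&: avoid S2 by rewrite /avoid -bigcap_setU setID.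
have disj2 : [disjoint S2 & G i].
  by rewrite -setI_eq0 /S2 setDE -setIA (setIC _ (G i)) setICr setI0.
have le_Ai : (#|A i :&: avoid S| <= #|A i :&: avoid S2|)%N.
  by rewrite subset_leq_card // avoidS setIS // subsetIr.
have cover : avoid S2 \subset avoid S :|: \bigcup_(j in S1) (A j :&: avoid S2).
  apply/subsetP=> x x2; rewrite inE; case: (pickP (fun j => (j \in S1) && (x \in A j))).
    by move=> j /andP [j1 xj]; apply/orP; right; apply/bigcupP; exists j; rewrite // inE xj.
  move=> none; apply/orP; left; rewrite avoidS inE x2 andbT; apply/bigcapP=> j j1.
  by rewrite inE; have := none j; rewrite j1 => /= ->.
have union_bound : INR #|avoid S2| <= INR #|avoid S| + INR #|S1| * (2 * p * INR #|avoid S2|).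
  have := INR_leq (leq_trans (subset_leq_card cover)
    (leq_trans (leq_card_setU _ _) (leq_add (leqnn _) (leq_card_bigcup _ _ _ _)))).
  rewrite -plusE plus_INR INR_sum -big_Rplus_const => le_cover.
  apply: Rle_trans le_cover _; apply/Rplus_le_compat_l/big_Rplus_le => j j1.
  by apply: IH.
have S1_le_D : INR #|S1| <= INR D.
  by apply: INR_leq; apply: leq_trans (card_G i); apply/subset_leq_card/subsetIr.
have avoid2_le : INR #|avoid S2| <= 2 * INR #|avoid S|.
  have := pos_INR #|avoid S2|; have := pos_INR #|S1| => *.
  have : 0 <= (INR D - INR #|S1|) * (2 * p * INR #|avoid S2|).
    by apply: Rmult_le_pos; [lra | nra].
  have : 0 <= (1 - 4 * p * INR D) * INR #|avoid S2| by apply: Rmult_le_pos; lra.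
  nra.
have := cond_le_indep i S2 disj2; have := INR_leq le_Ai.
have : p * INR #|avoid S2| <= p * (2 * INR #|avoid S|) by apply: Rmult_le_compat_l.
lra.
Qed.

Lemma avoid_invariant (S : {set I}) : (0 < #|avoid S|)%N /\
  forall i, i \notin S -> INR #|A i :&: avoid S| <= 2 * p * INR #|avoid S|.
Proof.
elim: {S}_.+1 {-2}S (ltnSn #|S|) => // k IHk S le_Sk.
split.
  case: (set_0Vmem S) => [-> | [i Si]]; first by rewrite /avoid big_set0 cardsT.
  have lt_Si : (#|S :\ i| < k)%N by move: le_Sk; rewrite (cardsD1 i S) Si.
  have [gt0 cond] := IHk _ lt_Si.
  by apply: (avoid_gt0_step _ _ Si gt0); apply: cond; rewrite setD11.
move=> i _; apply: cond_le_step => j.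
case: (set_0Vmem (S :&: G i)) => [-> | [j0 Sj0]]; first by rewrite inE.
have lt_S2 : (#|S :\: G i| < k)%N.
  have : (0 < #|S :&: G i|)%N by apply/card_gt0P; exists j0.
  by move: le_Sk; rewrite -(cardsID (G i) S); lia.
rewrite inE => /andP [_ Gj]; apply: (IHk _ lt_S2).2.
by rewrite inE Gj.
Qed.

Theorem lovasz_local_lemma : exists x : T, forall i, x \notin A i.
Proof.
have [/card_gt0P [x avoid_x] _] := avoid_invariant [set: I].
by exists x => i; move/bigcapP: avoid_x => /(_ i (in_setT i)); rewrite inE.
Qed.

End LocalLemma.

Arguments avoid {T I} A S.

(* Swapping the [C]-coordinates of two functions is an involution of pairs
   mapping [A :&: B] x setT onto [A] x [B]. *)
Lemma card_setI_indep (K : finType) (C : {set K}) (A B : {set {ffun K -> bool}}) :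
  (forall f g : {ffun K -> bool}, {in C, f =1 g} -> (f \in A) = (g \in A)) ->
  (forall f g : {ffun K -> bool}, {in ~: C, f =1 g} -> (f \in B) = (g \in B)) ->
  (#|A :&: B| * #|{ffun K -> bool}| = #|A| * #|B|)%N.
Proof.
move=> onA onB.
pose merge (f g : {ffun K -> bool}) := [ffun k => if k \in C then f k else g k].
pose swap (x : {ffun K -> bool} * {ffun K -> bool}) := (merge x.1 x.2, merge x.2 x.1).
have swapK : involutive swap.
  by move=> [f g]; congr (_, _); apply/ffunP=> k; rewrite !ffunE; case: (k \in C).
have preim : swap @^-1: setX A B = setX (A :&: B) setT.
  apply/setP=> [[f g]]; rewrite !inE /= andbT.
  rewrite (onA (merge f g) f); last by move=> k Ck; rewrite ffunE Ck.
  by rewrite (onB (merge g f) f) // => k; rewrite inE ffunE => /negbTE ->.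
by have := card_preimset (setX A B) (inv_inj swapK); rewrite preim !cardsX cardsT.
Qed.

Lemma exp_add_expN_le (l : R) : l ^ 2 <= 1/2 -> exp l + exp (- l) <= 2 * exp (2 * l ^ 2).
Proof.
move=> l_small.
have : exp l * exp (- l) = 1 by rewrite -exp_plus Rplus_opp_r exp_0.
have := exp_ineq1_le l; have := exp_ineq1_le (- l); have := exp_ineq1_le (2 * l ^ 2).
have := exp_pos l; have := exp_pos (- l) => *.
have : -1 < l < 1 by nra.
have : exp l * (1 - l) <= 1 by nra.
have : exp (- l) * (1 + l) <= 1 by nra.
have : (2 + 4 * l ^ 2) * (1 - l ^ 2) >= 2 by nra.
nra.
Qed.

Lemma markov_exp_count (T : finType) (f : T -> R) (a : R) :
  INR #|[set x | Rltb a (f x)]| * exp a <= \big[Rplus/0]_(x : T) exp (f x).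
Proof.
rewrite (bigID (fun x => Rltb a (f x))) /= -big_Rplus_const.
rewrite (eq_bigl (fun x => Rltb a (f x))) => [|x]; last by rewrite inE.
have : 0 <= \big[Rplus/0]_(x | ~~ Rltb a (f x)) exp (f x).
  by apply: big_Rplus_ge0 => x _; apply/Rlt_le/exp_pos.
have : \big[Rplus/0]_(x | Rltb a (f x)) exp a <= \big[Rplus/0]_(x | Rltb a (f x)) exp (f x).
  by apply: big_Rplus_le => x /RltbP lt_af; apply/Rlt_le/exp_increasing.
lra.
Qed.

Section RandomSides.

Context {m : nat}.
Implicit Types (s : {ffun 'I_m -> bool}) (N : {set 'I_m * bool}).

Definition selected s : {set 'I_m * bool} := [set u | s u.1 == u.2].

Definition sign s (u : 'I_m * bool) : R := if s u.1 == u.2 then 1 else -1.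

Lemma sum_sign s N :
  \big[Rplus/0]_(u in N) sign s u = 2 * INR #|N :&: selected s| - INR #|N|.
Proof.
rewrite (bigID (fun u => u \in selected s)) /=.
have -> : \big[Rplus/0]_(u in N | u \in selected s) sign s u =
          INR #|N :&: selected s| * 1.
  rewrite -big_Rplus_const; apply: eq_big => u; first by rewrite in_setI.
  by rewrite inE /sign => /andP [_ ->].
have -> : \big[Rplus/0]_(u in N | u \notin selected s) sign s u =
          INR #|N :\: selected s| * -1.
  rewrite -big_Rplus_const; apply: eq_big => u; first by rewrite in_setD andbC.
  by rewrite inE /sign => /andP [_ /negbTE ->].
rewrite (INR_cardsID N (selected s)).
(* [set] identifies the syntactically different copies of the two cardinals for [lra]. *)
by set a := INR #|N :&: _|; set b := INR #|N :\: _|; lra.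
Qed.

Definition coord_factor N (l : R) (k : 'I_m) (c : bool) : R :=
  \big[Rmult/1]_(b : bool) (if (k, b) \in N then exp (l * if c == b then 1 else -1) else 1).

Lemma exp_sum_sign N (l : R) s :
  exp (l * \big[Rplus/0]_(u in N) sign s u) = \big[Rmult/1]_(k : 'I_m) coord_factor N l k (s k).
Proof.
rewrite big_distrr (big_morph exp exp_plus exp_0) big_mkcond /=.
rewrite (eq_bigr (fun u => if (u.1, u.2) \in N then exp (l * sign s (u.1, u.2)) else 1)).
  by rewrite -(pair_bigA _ (fun k b => if (k, b) \in N then exp (l * sign s (k, b)) else 1)).
by move=> [k b].
Qed.

Lemma coord_factor_sum_le N (l : R) (k : 'I_m) : l ^ 2 <= 1/2 ->
  0 <= \big[Rplus/0]_(c : bool) coord_factor N l k c <=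
  2 * \big[Rmult/1]_(b : bool) (if (k, b) \in N then exp (2 * l ^ 2) else 1).
Proof.
move=> l_small; have := exp_add_expN_le l l_small.
have := exp_ineq1_le (2 * l ^ 2); have := exp_pos l; have := exp_pos (- l).
have : exp l * exp (- l) = 1 by rewrite -exp_plus Rplus_opp_r exp_0.
move: (exp (2 * l ^ 2)) => q *.
rewrite /coord_factor !big_bool /=.
have -> : l * -1 = - l by ring.
by case: ((k, true) \in N); case: ((k, false) \in N); rewrite ?Rmult_1_r ?Rmult_1_l; nra.
Qed.

Lemma sum_exp_sign_le N (l : R) : l ^ 2 <= 1/2 ->
  \big[Rplus/0]_s exp (l * \big[Rplus/0]_(u in N) sign s u) <= 2 ^ m * exp (2 * l ^ 2) ^ #|N|.
Proof.
move=> l_small; rewrite (eq_bigr _ (fun s _ => exp_sum_sign N l s)).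
rewrite -(bigA_distr_bigA (coord_factor N l)).
apply: Rle_trans (big_Rmult_le _ _ _ _ _ (fun k _ => coord_factor_sum_le N l k l_small)) _.
rewrite big_split /= big_const_ord.
have -> : iter m (Rmult 2) 1 = 2 ^ m by elim: (m) => //= k ->.
apply/Req_le; congr (_ * _).
rewrite (pair_bigA _ (fun k b => if (k, b) \in N then exp (2 * l ^ 2) else 1)).
by rewrite -big_Rmult_const [RHS]big_mkcond; apply: eq_bigr => -[k b].
Qed.

Definition near (a t b : R) : bool := Rleb (a - t) b && Rleb b (a + t).

Definition unbalanced N (t : R) : {set {ffun 'I_m -> bool}} :=
  [set s | ~~ near (INR #|N| / 2) t (INR #|N :&: selected s|)].

Lemma card_unbalanced_le N (t l : R) : 0 < l -> l ^ 2 <= 1/2 ->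
  INR #|unbalanced N t| <= 2 * (2 ^ m * exp (2 * l ^ 2) ^ #|N|) * exp (- (2 * l * t)).
Proof.
move=> l_gt0 l_small.
pose sg s := \big[Rplus/0]_(u in N) sign s u.
pose tail (l' : R) := [set s | Rltb (2 * l * t) (l' * sg s)].
have cover : unbalanced N t \subset tail l :|: tail (- l).
  apply/subsetP => s; rewrite !inE /sg sum_sign /near.
  move: (INR #|N|) (INR #|N :&: selected s|) => a b.
  case: (RlebP (a / 2 - t) b) => lo; case: (RlebP b (a / 2 + t)) => hi //= _.
  - apply/orP; left; apply/RltbP; apply Rnot_le_lt in hi.
    by have := Rmult_lt_compat_l l _ _ l_gt0 hi; nra.
  - apply/orP; right; apply/RltbP; apply Rnot_le_lt in lo.
    by have := Rmult_lt_compat_l l _ _ l_gt0 lo; nra.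
  - apply/orP; right; apply/RltbP; apply Rnot_le_lt in lo.
    by have := Rmult_lt_compat_l l _ _ l_gt0 lo; nra.
have tail_le l' : l' ^ 2 = l ^ 2 ->
    INR #|tail l'| <= 2 ^ m * exp (2 * l ^ 2) ^ #|N| * exp (- (2 * l * t)).
  move=> sq_l'; have l'_small : l' ^ 2 <= 1/2 by rewrite sq_l'.
  have le_tail : INR #|tail l'| * exp (2 * l * t) <= 2 ^ m * exp (2 * l ^ 2) ^ #|N|.
    rewrite -sq_l'; exact: Rle_trans (markov_exp_count _ _ _) (sum_exp_sign_le N l' l'_small).
  apply: Rle_trans (Rmult_le_compat_r _ _ _ (Rlt_le _ _ (exp_pos _)) le_tail).
  by rewrite Rmult_assoc -exp_plus Rplus_opp_r exp_0 Rmult_1_r; apply: Rle_refl.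
have := INR_leq (leq_trans (subset_leq_card cover) (leq_card_setU (tail l) (tail (- l)))).
rewrite -plusE plus_INR.
by have := tail_le l erefl; have := tail_le (- l) ltac:(ring); lra.
Qed.

End RandomSides.

Definition nbhd {V : finType} (e : rel V) (v : V) : {set V} := [set u | e v u].

Definition coords {m : nat} (N : {set 'I_m * bool}) : {set 'I_m} :=
  [set k | [exists b, (k, b) \in N]].

Lemma card_selected m (s : {ffun 'I_m -> bool}) : #|selected s| = m.
Proof.
have -> : selected s = [set (k, s k) | k in 'I_m].
  apply/setP => -[k b]; rewrite !inE /=.
  by apply/eqP/imsetP => [<- | [k' _ [-> ->]]]; first exists k.
by rewrite card_imset ?card_ord // => k k' [].
Qed.

Lemma unbalanced_coords m (N : {set 'I_m * bool}) t (f g : {ffun 'I_m -> bool}) :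
  {in coords N, f =1 g} -> (f \in unbalanced N t) = (g \in unbalanced N t).
Proof.
move=> eq_fg; rewrite !inE.
suff -> : N :&: selected f = N :&: selected g by [].
apply/setP => u; rewrite !inE; case Nu: (u \in N) => //=.
by rewrite eq_fg // inE; apply/existsP; exists u.2; rewrite -surjective_pairing.
Qed.

(* Through a common coordinate [k], [w] is adjacent to [(k, true)] or [(k, false)],
   where [k] is the coordinate of a neighbour of [v]. *)
Lemma card_coords_meet_le {m d} {e : rel ('I_m * bool)} v :
  symmetric e -> (forall x, #|nbhd e x| = d) ->
  (#|[set w | ~~ [disjoint coords (nbhd e v) & coords (nbhd e w)]]| <= 2 * d * d)%N.
Proof.
move=> e_sym e_reg.
have cover : [set w | ~~ [disjoint coords (nbhd e v) & coords (nbhd e w)]] \subset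
             \bigcup_(u in nbhd e v) (nbhd e (u.1, true) :|: nbhd e (u.1, false)).
  apply/subsetP => w; rewrite inE -setI_eq0 => /set0Pn [k].
  rewrite !inE => /andP [/existsP [b vkb] /existsP [b' wkb']].
  apply/bigcupP; exists (k, b) => //=; rewrite !inE in wkb' *.
  by rewrite (e_sym (k, true)) (e_sym (k, false)); case: b' wkb' => ->; rewrite ?orbT.
apply: leq_trans (subset_leq_card cover) _; apply: leq_trans (leq_card_bigcup _ _ _ _) _.
have -> : (2 * d * d = #|nbhd e v| * (2 * d))%N by rewrite e_reg mulnC.
rewrite -sum_nat_const leq_sum // => u _.
by rewrite (leq_trans (leq_card_setU _ _)) // !e_reg addnn -mul2n.
Qed.

Definition bad_prob (d : nat) (l t : R) : R := 2 * exp (2 * l ^ 2) ^ d * exp (- (2 * l * t)).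

Lemma exists_balanced_choice {m d} {e : rel ('I_m * bool)} {t l : R} :
  symmetric e -> (forall v, #|nbhd e v| = d) -> 0 < l -> l ^ 2 <= 1/2 ->
  4 * bad_prob d l t * INR (2 * d * d) <= 1 -> 2 * bad_prob d l t < 1 ->
  exists s : {ffun 'I_m -> bool},
    forall v, near (INR d / 2) t (INR #|nbhd e v :&: selected s|).
Proof.
move=> e_sym e_reg l_gt0 l_small lll_cond p_small.
pose A v := unbalanced (nbhd e v) t.
pose G v := [set w | ~~ [disjoint coords (nbhd e v) & coords (nbhd e w)]].
have indepA v (S : {set 'I_m * bool}) : [disjoint S & G v] ->
    (#|A v :&: avoid A S| * #|{ffun 'I_m -> bool}| <= #|A v| * #|avoid A S|)%N.
  move=> disj_SG; rewrite (card_setI_indep _ (coords (nbhd e v))) //.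
    by move=> f g eq_fg; apply: unbalanced_coords.
  move=> f g eq_fg; apply/bigcapP/bigcapP => avoid_S j Sj; have := avoid_S j Sj;
    rewrite !in_setC /A (@unbalanced_coords _ _ _ f g) // => k jk; apply: eq_fg;
    rewrite in_setC; apply: contraNN (negbT (disjointFr disj_SG Sj)) => vk;
    by rewrite /G inE -setI_eq0; apply/set0Pn; exists k; rewrite inE vk.
have probA v : INR #|A v| <= bad_prob d l t * INR #|{ffun 'I_m -> bool}|.
  rewrite card_ffun card_bool card_ord INR_expn (_ : INR 2 = 2); last by rewrite /=; lra.
  by apply: Rle_trans (card_unbalanced_le _ _ _ l_gt0 l_small) _; rewrite e_reg /bad_prob; lra.
have p_ge0 : 0 <= bad_prob d l t.
  by rewrite /bad_prob; have := exp_pos (- (2 * l * t)); have := pow_lt _ d (exp_pos (2 * l ^ 2)); nra.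
have [|s good_s] := lovasz_local_lemma _ _ _ _ _ _ indepA probA
  (fun v => card_coords_meet_le v e_sym e_reg) p_ge0 p_small lll_cond.
  by apply/card_gt0P; exists [ffun=> true].
by exists s => v; have := good_s v; rewrite inE negbK e_reg.
Qed.

Lemma exists_balanced_set {V : finType} {m d} {e : rel V} {t l : R} :
  #|V| = (m * 2)%N -> symmetric e -> (forall v, #|nbhd e v| = d) ->
  0 < l -> l ^ 2 <= 1/2 ->
  4 * bad_prob d l t * INR (2 * d * d) <= 1 -> 2 * bad_prob d l t < 1 ->
  exists X : {set V}, #|X| = m /\ forall v, near (INR d / 2) t (INR #|nbhd e v :&: X|).
Proof.
move=> card_V e_sym e_reg l_gt0 l_small lll_cond p_small.
have card_pairs : #|{: 'I_m * bool}| = #|V| by rewrite card_prod card_ord card_bool card_V.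
pose phi x : V := enum_val (cast_ord card_pairs (enum_rank x)).
pose psi v : 'I_m * bool := enum_val (cast_ord (esym card_pairs) (enum_rank v)).
have phiK : cancel phi psi by move=> x; rewrite /phi /psi enum_valK cast_ordK enum_rankK.
have psiK : cancel psi phi by move=> v; rewrite /phi /psi enum_valK cast_ordKV enum_rankK.
pose e' x y := e (phi x) (phi y).
have phi_inj : injective phi := can_inj phiK.
have nbhdE v : nbhd e v = phi @: nbhd e' (psi v).
  by rewrite (can2_imset_pre _ phiK psiK); apply/setP => u; rewrite !inE /e' !psiK.
have e'_reg x : #|nbhd e' x| = d.
  by rewrite -(card_imset _ phi_inj) -{1}[x]phiK -nbhdE.
have e'_sym : symmetric e' by move=> x y; apply: e_sym.
have [s near_s] := exists_balanced_choice e'_sym e'_reg l_gt0 l_small lll_cond p_small.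
exists (phi @: selected s); split; first by rewrite card_imset // card_selected.
move=> v; rewrite nbhdE -imsetI; last by move=> x y _ _; apply: phi_inj.
by rewrite card_imset.
Qed.

Lemma exp_pow (x : R) (n : nat) : exp x ^ n = exp (INR n * x).
Proof.
elim: n => [|n IHn]; first by rewrite /= Rmult_0_l exp_0.
by rewrite S_INR -tech_pow_Rmult IHn -exp_plus; f_equal; ring.
Qed.

(* [exp (y / 2) = exp (y / 14) ^ 7 >= (y / 14) ^ 7] and [y >= 16 * 14 ^ 7]. *)
Lemma pow6_le_exp_half (y : R) : 2 ^ 32 <= y -> 16 * y ^ 6 <= exp (y / 2).
Proof.
move=> y_large.
have : 16 * 14 ^ 7 <= 2 ^ 32.
  have : 14 ^ 7 <= 16 ^ 7 by apply: pow_incr; lra.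
  have : 16 * 16 ^ 7 = 2 ^ 32 by ring.
  lra.
have y_ge0 : 0 <= y by have := pow_lt 2 32; lra.
have -> : exp (y / 2) = exp (y / 14) ^ 7 by rewrite exp_pow; f_equal; simpl; field.
have : (y / 14) ^ 7 <= exp (y / 14) ^ 7.
  by apply: pow_incr; have := exp_ineq1_le (y / 14); lra.
have -> : (y / 14) ^ 7 = y * y ^ 6 / 14 ^ 7 by field.
have := pow_le y 6 y_ge0; have : 0 < 14 ^ 7 by apply: pow_lt; lra.
move=> pos14 y6_ge0 le_exp le_const.
have : 16 * 14 ^ 7 * y ^ 6 <= y * y ^ 6 by apply: Rmult_le_compat_r => //; lra.
have : y * y ^ 6 / 14 ^ 7 * 14 ^ 7 = y * y ^ 6 by field; lra.
by move=> *; apply: Rle_trans le_exp; apply: (Rmult_le_reg_r (14 ^ 7)) => //; nra.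
Qed.

(* With [y = d ^ (1/3)]: [t = y ^ 2], [l = 1 / (2 y)] and [bad_prob d l t = 2 exp (- y / 2)]. *)
Lemma bad_prob_small {d} : (2 ^ 96 <= d)%N ->
  let t := Rpower (INR d) (2 / 3) in let l := t / (2 * INR d) in
  [/\ 0 < l, l ^ 2 <= 1/2, 4 * bad_prob d l t * INR (2 * d * d) <= 1
    & 2 * bad_prob d l t < 1].
Proof.
move=> d_large t l.
have d_ge : 2 ^ 96 <= INR d by rewrite -[2]/(INR 2) -INR_expn; apply: INR_leq.
have d_gt0 : 0 < INR d by have := pow_lt 2 96; lra.
set y := Rpower (INR d) (1 / 3).
have y_gt0 : 0 < y by apply: exp_pos.
have t_eq : t = y ^ 2.
  by rewrite /y -Rpower_pow // Rpower_mult /t; f_equal; simpl; field.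
have d_eq : INR d = y ^ 3.
  rewrite /y -Rpower_pow // Rpower_mult (_ : 1 / 3 * INR 3 = 1) ?Rpower_1 //.
  by simpl; field.
have y_large : 2 ^ 32 <= y.
  apply: Rnot_lt_le => y_small.
  have : 0 < 2 ^ 32 by apply: pow_lt; lra.
  have : y * y < 2 ^ 32 * 2 ^ 32 by apply: Rmult_le_0_lt_compat; lra.
  have : y * y * y < 2 ^ 32 * 2 ^ 32 * 2 ^ 32 by apply: Rmult_le_0_lt_compat; nra.
  have : y ^ 3 = y * y * y by ring.
  have : 2 ^ 32 * 2 ^ 32 * 2 ^ 32 = 2 ^ 96 by ring.
  lra.
have l_eq : l = / (2 * y) by rewrite /l t_eq d_eq; field; lra.
have -> : bad_prob d l t = 2 * exp (- (y / 2)).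
  rewrite /bad_prob exp_pow Rmult_assoc -exp_plus; do 2 f_equal.
  by rewrite l_eq t_eq d_eq; field; lra.
have -> : INR (2 * d * d) = 2 * y ^ 6 by rewrite -!multE !mult_INR d_eq /=; ring.
have : exp (y / 2) * exp (- (y / 2)) = 1 by rewrite -exp_plus Rplus_opp_r exp_0.
have := pow6_le_exp_half y y_large; have := exp_pos (- (y / 2)).
have : 1 <= y ^ 6 by apply: pow_R1_Rle; have := pow_R1_Rle 2 32; lra.
move=> *; split; try nra.
- by rewrite l_eq; apply: Rinv_0_lt_compat; lra.
- rewrite l_eq -Rinv_pow; last lra.
  apply: (Rmult_le_reg_l ((2 * y) ^ 2)); first by apply: pow_lt; lra.
  by rewrite Rinv_r; [nra | apply: pow_nonzero; lra].
Qed.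

Lemma deg_ok_near d k :
  near (INR d / 2) (Rpower (INR d) (2 / 3)) (INR k) -> deg_ok d k.
Proof. by move=> /andP [/RlebP ? /RlebP ?]; split. Qed.

Lemma deg_induced_setC {n} {e : rel 'I_n} {d} (X : {set 'I_n}) v : regular e d ->
  deg_induced e (~: X) v = (d - deg_induced e X v)%N.
Proof.
move=> /(_ v) <-; rewrite /deg_induced -(cardsID X [set u | e v u]).
have -> : [set u in X | e v u] = [set u | e v u] :&: X.
  by apply/setP => u; rewrite !inE andbC.
have -> : [set u in ~: X | e v u] = [set u | e v u] :\: X.
  by apply/setP => u; rewrite !inE andbC.
by rewrite addKn.
Qed.

Lemma deg_ok_setC {n} {e : rel 'I_n} {d} (X : {set 'I_n}) v : regular e d ->
  deg_ok d (deg_induced e X v) -> deg_ok d (deg_induced e (~: X) v).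
Proof.
move=> e_reg; rewrite /deg_ok (deg_induced_setC _ _ e_reg) minus_INR; first lra.
by apply/leP; rewrite -(e_reg v) subset_leq_card //; apply/subsetP => u; rewrite !inE => /andP [].
Qed.

Local Close Scope R_scope.

Theorem lemma3p1 :
  exists d0 : nat, 0 < d0 /\
    forall d : nat, d0 <= d ->
    forall n : nat, ~~ odd n -> d.+1 <= n ->
    forall e : rel 'I_n, simple_graph e -> regular e d ->
    exists X Y : {set 'I_n},
      [disjoint X & Y] /\ X :|: Y = setT /\ #|X| = n./2 /\ #|Y| = n./2 /\
      (forall v, v \in X :|: Y -> deg_ok d (deg_bip e X Y v)) /\
      (forall v, v \in X -> deg_ok d (deg_induced e X v)) /\
      (forall v, v \in Y -> deg_ok d (deg_induced e Y v)).
Proof.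
exists (2 ^ 96); split; first by rewrite expn_gt0.
move=> d d_large n n_even _ e [e_sym _] e_reg.
have [l_gt0 l_small lll_cond p_small] := bad_prob_small d_large.
have card_n : #|'I_n| = n./2 * 2 by rewrite card_ord muln2 -{1}(odd_double_half n) (negbTE n_even).
have [X [card_X near_X]] := exists_balanced_set card_n e_sym e_reg l_gt0 l_small lll_cond p_small.
have okX v : deg_ok d (deg_induced e X v).
  by apply: deg_ok_near; rewrite /deg_induced setIdE setIC; apply: near_X.
have okY v : deg_ok d (deg_induced e (~: X) v) by apply: deg_ok_setC.
exists X, (~: X); split; first by rewrite -setI_eq0 setICr.
split; first by rewrite setUCr.
split; first by [].
split; first by move: (cardsC X); rewrite card_X card_n muln2 -addnn => /addnI.
split; first by move=> v _; rewrite /deg_bip; case: (v \in X); [exact: okY | exact: okX].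
by split=> v _.
Qed.
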